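(* Let $l\ge3$ and consider the edge reinforced random walk $(I_n)$ on $\mathcal G_l$ with weight function $W:\mathbb N\to(0,\infty)$ and arbitrary initial edge weights $X_0^e\in\mathbb N$. For each $i\in\{0,\ldots,l-1\}$ the process $\kappa_n^i:=\sum_{k=0}^{n-1}\frac{1_{\{I_k=i,\,I_{k+1}=i+1\}}}{W(X_k^{e_i})}-\sum_{k=0}^{n-1}\frac{1_{\{I_k=i,\,I_{k+1}=i-1\}}}{W(X_k^{e_{i-1}})}$, $n\ge0$, is an $(\mathcal F_n)$-martingale. Moreover, if $l$ is even, then $\kappa_n:=\sum_{i=0}^{l-1}(-1)^i\kappa_n^i+\sum_{i=0}^{l-1}(-1)^iW^*(X_0^{e_i})$ satisfies $\kappa_n=\sum_{i=0}^{l-1}(-1)^iW^*(X_n^{e_i})$ for all $n$, it is a martingale, and if in addition $\sum_{k\in\mathbb N}\frac1{W(k)}<\infty$ then $\kappa_n$ converges almost surely to a finite limit $\kappa_\infty$, with $\kappa_\infty=0$ almost surely on the event that all edges of $\mathcal G_l$ are traversed infinitely often.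
   Context: $\mathbb N=\{0,1,2,\ldots\}$. For $l\ge 3$, the cycle $\mathcal G_l$ has vertices $\{0,\ldots,l-1\}$ and edges $e_i=\{i,i+1\}$, addition modulo $l$. ERRW on $\mathcal G_l$: given $W:\mathbb N\to(0,\infty)$, initial edge weights $X_0^e\in\mathbb N$ and $I_0=v_0$, with natural filtration $(\mathcal F_n)$, $\mathbb P(I_{n+1}=v'\mid\mathcal F_n)1_{\{I_n=v\}}=\frac{W(X_n^{\{v,v'\}})}{\sum_{w\sim v}W(X_n^{\{v,w\}})}1_{\{I_n=v\sim v'\}}$, where $X_n^e=X_0^e+\sum_{k=0}^{n-1}1_{\{\{I_k,I_{k+1}\}=e\}}$. Define $W^*(n):=\sum_{k=0}^{n-1}\frac1{W(k)}$ for $n\in\mathbb N$, with $W^*(0)=0$. *)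

From Stdlib Require Import Reals Arith Bool.
Open Scope R_scope.

(* Cycle G_l: vertices 0..l-1, edge e_i = {i, i+1 mod l}. *)
Definition succv (l u : nat) : nat := ((u + 1) mod l)%nat.
Definition predv (l u : nat) : nat := ((u + l - 1) mod l)%nat.

(* index of the edge crossed by the step u -> v (meaningful for nearest-neighbour steps) *)
Definition edge_of (l u v : nat) : nat := if Nat.eqb v (succv l u) then u else v.

Fixpoint sumR (f : nat -> R) (n : nat) : R :=
  match n with O => 0 | S m => sumR f m + f m end.
Fixpoint prodR (f : nat -> R) (n : nat) : R :=
  match n with O => 1 | S m => prodR f m * f m end.

Definition Wstar (W : nat -> R) (n : nat) : R := sumR (fun k => / W k) n.

(* paths are infinite vertex sequences p : nat -> nat, p k = I_k *)
Fixpoint cross_count (l : nat) (p : nat -> nat) (n i : nat) : nat :=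
  match n with
  | O => O
  | S m => (cross_count l p m i + (if Nat.eqb (edge_of l (p m) (p (S m))) i then 1 else 0))%nat
  end.

Definition Xn (l : nat) (X0 : nat -> nat) (p : nat -> nat) (n i : nat) : nat :=
  (X0 i + cross_count l p n i)%nat.

(* P(I_{n+1} = v | F_n) on the history p 0..n *)
Definition trans (l : nat) (W : nat -> R) (X0 : nat -> nat) (p : nat -> nat) (n v : nat) : R :=
  let u := p n in
  let a := W (Xn l X0 p n u) in
  let b := W (Xn l X0 p n (predv l u)) in
  if Nat.eqb v (succv l u) then a / (a + b)
  else if Nat.eqb v (predv l u) then b / (a + b) else 0.

(* P(I_0 = p 0, ..., I_n = p n) *)
Definition cyl_prob (l : nat) (W : nat -> R) (X0 : nat -> nat) (v0 : nat)
  (p : nat -> nat) (n : nat) : R :=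
  (if Nat.eqb (p 0%nat) v0 then 1 else 0) * prodR (fun k => trans l W X0 p k (p (S k))) n.

Definition ext (p : nat -> nat) (n v : nat) : nat -> nat :=
  fun k => if Nat.leb k n then p k else v.

(* (F_n)-martingale on path space: adapted, and E[M_{n+1} | F_n] = M_n on every
   history of positive probability (integrability is automatic: M_n takes
   finitely many values on positive-probability histories). *)
Definition martingale (l : nat) (W : nat -> R) (X0 : nat -> nat) (v0 : nat)
  (M : (nat -> nat) -> nat -> R) : Prop :=
  (forall p q n, (forall k, (k <= n)%nat -> p k = q k) -> M p n = M q n) /\
  (forall p n, 0 < cyl_prob l W X0 v0 p n ->
     sumR (fun v => trans l W X0 p n v * M (ext p n v) (S n)) l = M p n).

Definition kappa_i (l : nat) (W : nat -> R) (X0 : nat -> nat) (i : nat)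
  (p : nat -> nat) (n : nat) : R :=
  sumR (fun k =>
    (if Nat.eqb (p k) i && Nat.eqb (p (S k)) (succv l i)
     then / W (Xn l X0 p k i) else 0)
  - (if Nat.eqb (p k) i && Nat.eqb (p (S k)) (predv l i)
     then / W (Xn l X0 p k (predv l i)) else 0)) n.

Definition kappa (l : nat) (W : nat -> R) (X0 : nat -> nat)
  (p : nat -> nat) (n : nat) : R :=
  sumR (fun i => (-1) ^ i * kappa_i l W X0 i p n) l
  + sumR (fun i => (-1) ^ i * Wstar W (X0 i)) l.

(* Null sets for the law of the ERRW on path space: sets of outer measure 0,
   i.e. coverable by countably many cylinders of arbitrarily small total mass. *)
Definition null_set (l : nat) (W : nat -> R) (X0 : nat -> nat) (v0 : nat)
  (A : (nat -> nat) -> Prop) : Prop :=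
  forall eps, 0 < eps ->
    exists c : nat -> (nat -> nat) * nat,
      (forall p, A p -> exists j, forall k, (k <= snd (c j))%nat -> p k = fst (c j) k) /\
      (forall N, sumR (fun j => cyl_prob l W X0 v0 (fst (c j)) (snd (c j))) N <= eps).

Definition almost_surely (l : nat) (W : nat -> R) (X0 : nat -> nat) (v0 : nat)
  (P : (nat -> nat) -> Prop) : Prop :=
  null_set l W X0 v0 (fun p => ~ P p).

Definition all_edges_io (l : nat) (p : nat -> nat) : Prop :=
  forall i, (i < l)%nat -> forall N, exists k, (N <= k)%nat /\ edge_of l (p k) (p (S k)) = i.

From Stdlib Require Import Reals Bool Lia Lra Cantor Classical.
Open Scope R_scope.

(* The walk at u moves to u+1 with probability a/(a+b) and to u-1 with
   probability b/(a+b), where a = W(X^{e_u}) and b = W(X^{e_{u-1}}).  The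
   increment of kappa^i is 1/a on the first move and -1/b on the second
   (and 0 unless the walk sits at i), so its conditional mean is
   a/(a+b)*(1/a) - b/(a+b)*(1/b) = 0: each kappa^i is a martingale, and so is
   any constant plus linear combination of them, in particular kappa.
   For even l the sign (-1)^i alternates along the whole cycle, so a step
   across e_j changes kappa by (-1)^j / W(X^{e_j}), which is exactly the change
   of sum_i (-1)^i W^*(X^{e_i}); this gives the closed form of kappa_n.  If
   sum 1/W(k) = s < oo, each W^*(X_n^{e_i}) is nondecreasing and bounded by s,
   hence converges, and tends to s when e_i is crossed infinitely often; the
   alternating sum of l copies of s vanishes.  Finally, "almost surely" only
   needs the conclusion on paths all of whose cylinders have positive mass:
   the remaining paths are covered by countably many null cylinders. *)

Lemma succv_lt l u : (0 < l)%nat -> (succv l u < l)%nat.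
Proof. intros. unfold succv. apply Nat.mod_upper_bound. lia. Qed.

Lemma predv_lt l u : (0 < l)%nat -> (predv l u < l)%nat.
Proof. intros. unfold predv. apply Nat.mod_upper_bound. lia. Qed.

Lemma succv_eq l u : (u < l)%nat ->
  succv l u = if Nat.eqb (u + 1) l then 0%nat else (u + 1)%nat.
Proof.
  intros Hu. unfold succv. destruct (Nat.eqb_spec (u + 1) l) as [E|E].
  - rewrite E. apply Nat.Div0.mod_same.
  - apply Nat.mod_small. lia.
Qed.

Lemma predv_eq l u : (u < l)%nat ->
  predv l u = if Nat.eqb u 0 then (l - 1)%nat else (u - 1)%nat.
Proof.
  intros Hu. unfold predv. destruct (Nat.eqb_spec u 0) as [E|E].
  - subst. apply Nat.mod_small. lia.
  - replace (u + l - 1)%nat with ((u - 1) + 1 * l)%nat by lia.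
    rewrite Nat.Div0.mod_add. apply Nat.mod_small. lia.
Qed.

Lemma succv_neq_predv l u : (3 <= l)%nat -> (u < l)%nat -> succv l u <> predv l u.
Proof.
  intros Hl Hu. rewrite succv_eq, predv_eq by lia.
  destruct (Nat.eqb_spec (u + 1) l); destruct (Nat.eqb_spec u 0); lia.
Qed.

Lemma edge_of_succv l u : edge_of l u (succv l u) = u.
Proof. unfold edge_of. now rewrite Nat.eqb_refl. Qed.

Lemma edge_of_predv l u : (3 <= l)%nat -> (u < l)%nat ->
  edge_of l u (predv l u) = predv l u.
Proof.
  intros Hl Hu. unfold edge_of.
  destruct (Nat.eqb_spec (predv l u) (succv l u)) as [E|]; auto.
  exfalso. apply (succv_neq_predv l u); auto.
Qed.

(* On an even cycle the sign (-1)^i flips across every edge, including the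
   edge joining l-1 and 0. *)
Lemma sign_predv l u : Nat.Even l -> (u < l)%nat ->
  (-1) ^ (predv l u) = - ((-1) ^ u).
Proof.
  intros [m Hm] Hu. rewrite predv_eq by lia.
  destruct (Nat.eqb_spec u 0) as [E|E].
  - subst u. rewrite Hm.
    assert (Hsplit : (-1) ^ (2 * m) = (-1) ^ (2 * m - 1) * (-1) ^ 1).
    { rewrite <- pow_add. f_equal. lia. }
    rewrite pow_mult in Hsplit. replace ((-1) ^ 2) with 1 in Hsplit by ring.
    rewrite pow1 in Hsplit. simpl in *. lra.
  - assert (Hsplit : (-1) ^ u = (-1) ^ (u - 1) * (-1) ^ 1).
    { rewrite <- pow_add. f_equal. lia. }
    simpl in Hsplit. lra.
Qed.

Lemma sumR_ext f g n : (forall k, (k < n)%nat -> f k = g k) -> sumR f n = sumR g n.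
Proof.
  induction n as [|n IH]; intros H; simpl; auto.
  rewrite IH, H by (intros; try apply H; lia). reflexivity.
Qed.

Lemma sumR_plus f g n : sumR (fun k => f k + g k) n = sumR f n + sumR g n.
Proof. induction n as [|n IH]; simpl; [ring | rewrite IH; ring]. Qed.

Lemma sumR_scal c f n : sumR (fun k => c * f k) n = c * sumR f n.
Proof. induction n as [|n IH]; simpl; [ring | rewrite IH; ring]. Qed.

Lemma sumR_zero f n : (forall k, (k < n)%nat -> f k = 0) -> sumR f n = 0.
Proof.
  induction n as [|n IH]; intros H; simpl; auto.
  rewrite IH, H by (intros; try apply H; lia). ring.
Qed.

Lemma sumR_nonpos f n : (forall k, (k < n)%nat -> f k <= 0) -> sumR f n <= 0.
Proof.
  induction n as [|n IH]; intros H; simpl; [lra|].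
  assert (sumR f n <= 0) by (apply IH; intros; apply H; lia).
  assert (f n <= 0) by (apply H; lia). lra.
Qed.

Lemma sumR_single f n s : (s < n)%nat ->
  (forall k, (k < n)%nat -> k <> s -> f k = 0) -> sumR f n = f s.
Proof.
  induction n as [|n IH]; intros Hs H; [lia|]. simpl.
  destruct (Nat.eq_dec s n) as [E|E].
  - subst. rewrite sumR_zero; [ring|]. intros; apply H; lia.
  - rewrite IH, (H n) by (intros; try apply H; lia). ring.
Qed.

Lemma sumR_pair f n s t : (s < n)%nat -> (t < n)%nat -> s <> t ->
  (forall k, (k < n)%nat -> k <> s -> k <> t -> f k = 0) ->
  sumR f n = f s + f t.
Proof.
  intros Hs Ht Hst H.
  rewrite (sumR_ext f (fun k => (if Nat.eqb k s then f s else 0)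
                               + (if Nat.eqb k t then f t else 0))).
  - rewrite sumR_plus, (sumR_single _ n s), (sumR_single _ n t); auto.
    + rewrite !Nat.eqb_refl. reflexivity.
    + intros k _ Hk. apply Nat.eqb_neq in Hk. now rewrite Hk.
    + intros k _ Hk. apply Nat.eqb_neq in Hk. now rewrite Hk.
  - intros k Hk. destruct (Nat.eqb_spec k s); destruct (Nat.eqb_spec k t); subst.
    + contradiction.
    + ring.
    + ring.
    + rewrite H by auto. ring.
Qed.

Lemma sumR_sum_f_R0 f m : sumR f (S m) = sum_f_R0 f m.
Proof.
  induction m as [|m IH]; [simpl; ring|].
  change (sumR f (S (S m))) with (sumR f (S m) + f (S m)). now rewrite IH.
Qed.

Lemma sumR_alternating_const c l : Nat.Even l -> sumR (fun i => (-1) ^ i * c) l = 0.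
Proof.
  intros [m ->]. induction m as [|m IH]; [simpl; ring|].
  replace (2 * S m)%nat with (S (S (2 * m))) by lia.
  change (sumR (fun i => (-1) ^ i * c) (S (S (2 * m)))) with
    (sumR (fun i => (-1) ^ i * c) (2 * m) + (-1) ^ (2 * m) * c + (-1) ^ (S (2 * m)) * c).
  rewrite IH. simpl. ring.
Qed.

Definition agree (p q : nat -> nat) (n : nat) : Prop :=
  forall k, (k <= n)%nat -> p k = q k.

Lemma agree_le p q n m : (m <= n)%nat -> agree p q n -> agree p q m.
Proof. intros Hm H k Hk. apply H. lia. Qed.

Lemma cross_count_agree l p q n i : agree p q n ->
  cross_count l p n i = cross_count l q n i.
Proof.
  induction n as [|n IH]; intros H; simpl; auto.
  rewrite IH by (apply (agree_le p q (S n)); auto).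
  rewrite (H n), (H (S n)) by lia. reflexivity.
Qed.

Lemma Xn_agree l X0 p q n i : agree p q n -> Xn l X0 p n i = Xn l X0 q n i.
Proof. intros H. unfold Xn. now rewrite (cross_count_agree l p q n i H). Qed.

Lemma kappa_i_agree l W X0 i p q n : agree p q n ->
  kappa_i l W X0 i p n = kappa_i l W X0 i q n.
Proof.
  intros H. unfold kappa_i. apply sumR_ext. intros k Hk.
  assert (Hk' : agree p q k) by (apply (agree_le p q n); auto; lia).
  rewrite (H k), (H (S k)), !(Xn_agree l X0 p q k) by (auto; lia). reflexivity.
Qed.

Lemma trans_agree l W X0 p q n v : agree p q n -> trans l W X0 p n v = trans l W X0 q n v.
Proof.
  intros H. unfold trans. rewrite (H n), !(Xn_agree l X0 p q n) by (auto; lia).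
  reflexivity.
Qed.

Lemma cyl_prob_agree l W X0 v0 p q n : agree p q n ->
  cyl_prob l W X0 v0 p n = cyl_prob l W X0 v0 q n.
Proof.
  intros H. unfold cyl_prob. rewrite (H 0%nat) by lia. f_equal.
  induction n as [|n IH]; simpl; auto.
  rewrite IH by (apply (agree_le p q (S n)); auto).
  rewrite (H (S n)), (trans_agree l W X0 p q n) by (try apply (agree_le p q (S n)); auto).
  reflexivity.
Qed.

Lemma ext_agree p n v : agree (ext p n v) p n.
Proof. intros k Hk. unfold ext. apply Nat.leb_le in Hk. now rewrite Hk. Qed.

Lemma ext_S p n v : ext p n v (S n) = v.
Proof.
  unfold ext. replace (Nat.leb (S n) n) with false; auto.
  symmetry. apply Nat.leb_gt. lia.
Qed.

Lemma Xn_S l X0 p n i : Xn l X0 p (S n) i =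
  (Xn l X0 p n i + (if Nat.eqb (edge_of l (p n) (p (S n))) i then 1 else 0))%nat.
Proof. unfold Xn. simpl. lia. Qed.

Lemma Xn_mono l X0 p n m i : (n <= m)%nat -> (Xn l X0 p n i <= Xn l X0 p m i)%nat.
Proof. induction 1; auto. rewrite Xn_S. lia. Qed.

Lemma Xn_unbounded l X0 p i : all_edges_io l p -> (i < l)%nat ->
  forall M, exists N, forall n, (N <= n)%nat -> (M <= Xn l X0 p n i)%nat.
Proof.
  intros Hio Hi M. induction M as [|M [N HN]].
  - exists 0%nat. intros. lia.
  - destruct (Hio i Hi N) as [k [Hk Ek]]. exists (S k). intros n Hn.
    pose proof (Xn_mono l X0 p (S k) n i Hn) as Hmono.
    rewrite Xn_S, Ek, Nat.eqb_refl in Hmono. pose proof (HN k Hk). lia.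
Qed.

Lemma Wstar_S W m : Wstar W (S m) = Wstar W m + / W m.
Proof. reflexivity. Qed.

Lemma Wstar_mono W m m' : (forall k, 0 < W k) -> (m <= m')%nat -> Wstar W m <= Wstar W m'.
Proof.
  intros hW. induction 1 as [|m' _ IH]; [lra|].
  rewrite Wstar_S. pose proof (Rinv_0_lt_compat _ (hW m')). lra.
Qed.

Lemma Wstar_le_sum W s m : (forall k, 0 < W k) -> infinite_sum (fun k => / W k) s ->
  Wstar W m <= s.
Proof.
  intros hW Hs. destruct m as [|m].
  - apply Rle_trans with (/ W 0%nat).
    + unfold Wstar. simpl. pose proof (Rinv_0_lt_compat _ (hW 0%nat)). lra.
    + apply (sum_incr _ 0 s Hs). intros k. apply Rlt_le, Rinv_0_lt_compat, hW.
  - unfold Wstar. rewrite sumR_sum_f_R0. apply sum_incr; auto.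
    intros k. apply Rlt_le, Rinv_0_lt_compat, hW.
Qed.

Lemma Wstar_cv_sum W s (u : nat -> nat) : infinite_sum (fun k => / W k) s ->
  (forall M, exists N, forall n, (N <= n)%nat -> (M <= u n)%nat) ->
  Un_cv (fun n => Wstar W (u n)) s.
Proof.
  intros Hs Hu eps He. destruct (Hs eps He) as [N0 HN0].
  destruct (Hu (S N0)) as [N HN]. exists N. intros n Hn.
  specialize (HN n Hn). destruct (u n) as [|m]; [lia|].
  unfold Wstar. rewrite sumR_sum_f_R0. apply HN0. lia.
Qed.

Lemma Un_cv_ext u v L : (forall n, u n = v n) -> Un_cv v L -> Un_cv u L.
Proof.
  intros E H eps He. destruct (H eps He) as [N HN]. exists N. intros. rewrite E. auto.
Qed.

Lemma Un_cv_const c : Un_cv (fun _ => c) c.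
Proof.
  intros eps He. exists 0%nat. intros. unfold Rdist. rewrite Rminus_diag, Rabs_R0. lra.
Qed.

Lemma Un_cv_signed_sum (f : nat -> nat -> R) L m :
  (forall i, (i < m)%nat -> Un_cv (fun n => f n i) (L i)) ->
  Un_cv (fun n => sumR (fun i => (-1) ^ i * f n i) m) (sumR (fun i => (-1) ^ i * L i) m).
Proof.
  induction m as [|m IH]; intros H; simpl; [apply Un_cv_const|].
  apply CV_plus.
  - apply IH. intros; apply H; lia.
  - apply CV_mult; [apply Un_cv_const | apply H; lia].
Qed.

(* Encoding of finite histories p 0..n by natural numbers (via Cantor
   pairing), used to enumerate all cylinders. *)
Fixpoint encode_history (n : nat) (p : nat -> nat) : nat :=
  match n with
  | O => p 0%nat
  | S m => Cantor.to_nat (p 0%nat, encode_history m (fun k => p (S k)))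
  end.

Fixpoint decode_history (n c : nat) : nat -> nat :=
  match n with
  | O => fun _ => c
  | S m => fun k => match k with
                    | O => fst (Cantor.of_nat c)
                    | S k' => decode_history m (snd (Cantor.of_nat c)) k'
                    end
  end.

Lemma decode_encode_history n : forall p, agree (decode_history n (encode_history n p)) p n.
Proof.
  induction n as [|n IH]; intros p k Hk; cbn [decode_history encode_history].
  - now replace k with 0%nat by lia.
  - rewrite Cantor.cancel_of_to. destruct k as [|k]; [reflexivity|].
    apply (IH (fun k => p (S k))). lia.
Qed.

Section ERRW.

Variables (l : nat) (W : nat -> R) (X0 : nat -> nat) (v0 : nat).
Hypothesis hl : (3 <= l)%nat.
Hypothesis hW : forall k, 0 < W k.
Hypothesis hv0 : (v0 < l)%nat.

Let P := cyl_prob l W X0 v0.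

Let right_w p n := W (Xn l X0 p n (p n)).
Let left_w p n := W (Xn l X0 p n (predv l (p n))).

Lemma trans_nonneg p n v : 0 <= trans l W X0 p n v.
Proof.
  unfold trans.
  pose proof (hW (Xn l X0 p n (p n))). pose proof (hW (Xn l X0 p n (predv l (p n)))).
  destruct (Nat.eqb v _); [|destruct (Nat.eqb v _)]; try lra;
    apply Rlt_le, Rdiv_lt_0_compat; lra.
Qed.

Lemma cyl_prob_S p n : P p (S n) = P p n * trans l W X0 p n (p (S n)).
Proof. unfold P, cyl_prob. simpl. ring. Qed.

Lemma cyl_prob_nonneg p n : 0 <= P p n.
Proof.
  induction n as [|n IH].
  - unfold P, cyl_prob. simpl. destruct (Nat.eqb _ _); lra.
  - rewrite cyl_prob_S. apply Rmult_le_pos; auto using trans_nonneg.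
Qed.

Lemma cyl_prob_S_pos p n : 0 < P p (S n) ->
  0 < P p n /\ 0 < trans l W X0 p n (p (S n)).
Proof.
  rewrite cyl_prob_S. intros H.
  pose proof (cyl_prob_nonneg p n). pose proof (trans_nonneg p n (p (S n))).
  split; apply Rnot_le_lt; intro; nra.
Qed.

Lemma trans_pos_neighbour p n v : 0 < trans l W X0 p n v ->
  v = succv l (p n) \/ v = predv l (p n).
Proof.
  unfold trans. destruct (Nat.eqb_spec v (succv l (p n))); auto.
  destruct (Nat.eqb_spec v (predv l (p n))); auto. lra.
Qed.

Lemma cyl_prob_pos_in_cycle p n : 0 < P p n -> forall k, (k <= n)%nat -> (p k < l)%nat.
Proof.
  induction n as [|n IH]; intros H k Hk.
  - assert (k = 0%nat) by lia. subst k.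
    unfold P, cyl_prob in H. simpl in H.
    destruct (Nat.eqb_spec (p 0%nat) v0) as [->|]; [auto | lra].
  - destruct (cyl_prob_S_pos p n H) as [Hn Hstep].
    destruct (Nat.eq_dec k (S n)) as [->|]; [|apply IH; auto; lia].
    destruct (trans_pos_neighbour p n _ Hstep) as [->| ->];
      [apply succv_lt | apply predv_lt]; lia.
Qed.

Lemma cyl_prob_pos_here p n : 0 < P p n -> (p n < l)%nat.
Proof. intros H. apply (cyl_prob_pos_in_cycle p n H). lia. Qed.

Lemma cond_exp_step p n G : (p n < l)%nat ->
  sumR (fun v => trans l W X0 p n v * G v) l =
  right_w p n / (right_w p n + left_w p n) * G (succv l (p n))
  + left_w p n / (right_w p n + left_w p n) * G (predv l (p n)).
Proof.
  intros Hu. rewrite (sumR_pair _ l (succv l (p n)) (predv l (p n))).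
  - unfold trans. rewrite Nat.eqb_refl.
    destruct (Nat.eqb_spec (predv l (p n)) (succv l (p n))) as [E|_].
    + exfalso. apply (succv_neq_predv l (p n)); auto.
    + rewrite Nat.eqb_refl. reflexivity.
  - apply succv_lt. lia.
  - apply predv_lt. lia.
  - now apply succv_neq_predv.
  - intros v _ Hs Ht. unfold trans.
    apply Nat.eqb_neq in Hs, Ht. rewrite Hs, Ht. ring.
Qed.

Lemma trans_total p n : (p n < l)%nat -> sumR (fun v => trans l W X0 p n v) l = 1.
Proof.
  intros Hu. rewrite (sumR_ext _ (fun v => trans l W X0 p n v * 1)) by (intros; ring).
  rewrite cond_exp_step by auto.
  assert (0 < right_w p n) by apply hW. assert (0 < left_w p n) by apply hW.
  field. lra.
Qed.

(* Martingales are closed under constant shifts of linear combinations: the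
   one-step expectation is linear and the transition probabilities sum to 1. *)
Lemma martingale_lincomb (M : nat -> (nat -> nat) -> nat -> R) (c : nat -> R) m C :
  (forall i, (i < m)%nat -> martingale l W X0 v0 (M i)) ->
  martingale l W X0 v0 (fun p n => sumR (fun i => c i * M i p n) m + C).
Proof.
  intros HM. split.
  - intros p q n H. f_equal. apply sumR_ext. intros i Hi.
    f_equal. now apply (proj1 (HM i Hi)).
  - intros p n H.
    rewrite (sumR_ext _ (fun v => sumR (fun i => c i * (trans l W X0 p n v * M i (ext p n v) (S n))) m
                                 + C * trans l W X0 p n v)).
    2:{ intros v _. rewrite Rmult_plus_distr_l, <- sumR_scal.
        f_equal; [apply sumR_ext; intros; ring | ring]. }
    rewrite sumR_plus, sumR_scal, trans_total by (apply cyl_prob_pos_here; auto).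
    f_equal; [|ring].
    induction m as [|m IH]; simpl; [apply sumR_zero; intros; reflexivity|].
    rewrite sumR_plus, IH by (intros; apply HM; lia).
    rewrite sumR_scal, (proj2 (HM m ltac:(lia))) by auto. reflexivity.
Qed.

Definition kappa_inc i (p : nat -> nat) n : R :=
  (if Nat.eqb (p n) i && Nat.eqb (p (S n)) (succv l i)
   then / W (Xn l X0 p n i) else 0)
  - (if Nat.eqb (p n) i && Nat.eqb (p (S n)) (predv l i)
     then / W (Xn l X0 p n (predv l i)) else 0).

Lemma kappa_i_S i p n : kappa_i l W X0 i p (S n) = kappa_i l W X0 i p n + kappa_inc i p n.
Proof. reflexivity. Qed.

Lemma kappa_inc_ext i p n v : kappa_inc i (ext p n v) n =
  (if Nat.eqb (p n) i && Nat.eqb v (succv l i) then / W (Xn l X0 p n i) else 0)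
  - (if Nat.eqb (p n) i && Nat.eqb v (predv l i) then / W (Xn l X0 p n (predv l i)) else 0).
Proof.
  unfold kappa_inc. rewrite ext_S, (ext_agree p n v n) by lia.
  rewrite !(Xn_agree l X0 (ext p n v) p n) by apply ext_agree. reflexivity.
Qed.

(* Each kappa^i is a martingale: the increment is 1/a or -1/b with
   probabilities a/(a+b) and b/(a+b). *)
Lemma kappa_i_martingale i : martingale l W X0 v0 (kappa_i l W X0 i).
Proof.
  split; [intros; now apply kappa_i_agree|].
  intros p n H. pose proof (cyl_prob_pos_here p n H) as Hu.
  rewrite cond_exp_step by auto. rewrite !kappa_i_S, !kappa_inc_ext.
  rewrite !(kappa_i_agree l W X0 i (ext p n _) p n) by apply ext_agree.
  assert (Ha : 0 < right_w p n) by apply hW. assert (Hb : 0 < left_w p n) by apply hW.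
  destruct (Nat.eqb_spec (p n) i) as [<-|E]; simpl; [|field; lra].
  rewrite Nat.eqb_refl.
  destruct (Nat.eqb_spec (predv l (p n)) (succv l (p n))) as [E|_];
    [exfalso; apply (succv_neq_predv l (p n)); auto|].
  destruct (Nat.eqb_spec (succv l (p n)) (predv l (p n))) as [E|_];
    [exfalso; apply (succv_neq_predv l (p n)); auto|].
  rewrite Nat.eqb_refl. unfold right_w, left_w in *. field. lra.
Qed.

Lemma kappa_martingale : martingale l W X0 v0 (kappa l W X0).
Proof. apply martingale_lincomb. intros i _. apply kappa_i_martingale. Qed.

Section EvenCycle.

Hypothesis heven : Nat.Even l.

Lemma signed_kappa_inc p n : (p n < l)%nat ->
  (p (S n) = succv l (p n) \/ p (S n) = predv l (p n)) ->
  let e := edge_of l (p n) (p (S n)) in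
  sumR (fun i => (-1) ^ i * kappa_inc i p n) l = (-1) ^ e * / W (Xn l X0 p n e).
Proof.
  intros Hu Hstep e. rewrite (sumR_single _ l (p n)) by
    (auto; intros k _ Hk; unfold kappa_inc; apply Nat.eqb_neq in Hk;
     rewrite Nat.eqb_sym, Hk; simpl; ring).
  unfold kappa_inc, e. rewrite Nat.eqb_refl. simpl.
  destruct Hstep as [-> | ->].
  - rewrite edge_of_succv, Nat.eqb_refl.
    destruct (Nat.eqb_spec (succv l (p n)) (predv l (p n))) as [E|_];
      [exfalso; apply (succv_neq_predv l (p n)); auto | ring].
  - rewrite edge_of_predv, Nat.eqb_refl, sign_predv by auto.
    destruct (Nat.eqb_spec (predv l (p n)) (succv l (p n))) as [E|_];
      [exfalso; apply (succv_neq_predv l (p n)); auto | ring].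
Qed.

Lemma signed_Wstar_step p n : (edge_of l (p n) (p (S n)) < l)%nat ->
  let e := edge_of l (p n) (p (S n)) in
  sumR (fun i => (-1) ^ i * Wstar W (Xn l X0 p (S n) i)) l =
  sumR (fun i => (-1) ^ i * Wstar W (Xn l X0 p n i)) l + (-1) ^ e * / W (Xn l X0 p n e).
Proof.
  intros He e.
  rewrite (sumR_ext _ (fun i => (-1) ^ i * Wstar W (Xn l X0 p n i)
             + (if Nat.eqb e i then (-1) ^ i * / W (Xn l X0 p n i) else 0))).
  - rewrite sumR_plus, (sumR_single (fun i => if Nat.eqb e i then _ else 0) l e) by
      (auto; intros k _ Hk; apply Nat.eqb_neq in Hk; now rewrite Nat.eqb_sym, Hk).
    now rewrite Nat.eqb_refl.
  - intros i _. rewrite Xn_S. fold e.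
    destruct (Nat.eqb e i); [rewrite Nat.add_1_r, Wstar_S | rewrite Nat.add_0_r]; ring.
Qed.

Lemma kappa_closed_form p n : 0 < P p n ->
  kappa l W X0 p n = sumR (fun i => (-1) ^ i * Wstar W (Xn l X0 p n i)) l.
Proof.
  induction n as [|n IH]; intros H.
  - unfold kappa. rewrite sumR_zero by (intros; unfold kappa_i; simpl; ring).
    rewrite Rplus_0_l. apply sumR_ext. intros. unfold Xn. simpl. now rewrite Nat.add_0_r.
  - destruct (cyl_prob_S_pos p n H) as [Hn Hstep].
    pose proof (cyl_prob_pos_here p n Hn) as Hu.
    apply trans_pos_neighbour in Hstep.
    assert (He : (edge_of l (p n) (p (S n)) < l)%nat).
    { destruct Hstep as [-> | ->].
      - now rewrite edge_of_succv.
      - rewrite edge_of_predv by auto. apply predv_lt. lia. }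
    rewrite signed_Wstar_step, <- IH, <- signed_kappa_inc by auto.
    unfold kappa.
    rewrite (sumR_ext (fun i => (-1) ^ i * kappa_i l W X0 i p (S n))
               (fun i => (-1) ^ i * kappa_i l W X0 i p n + (-1) ^ i * kappa_inc i p n))
      by (intros; rewrite kappa_i_S; ring).
    rewrite sumR_plus. ring.
Qed.

End EvenCycle.

(* Paths that eventually leave the support of the walk form a null set:
   they are covered by the countably many cylinders of probability 0. *)
Lemma null_set_of_impossible (A : (nat -> nat) -> Prop) :
  (forall p, A p -> exists n, ~ 0 < P p n) -> null_set l W X0 v0 A.
Proof.
  intros HA eps Heps.
  (* the j-th cylinder: the decoded history if it is impossible, and an
     impossible one-point history (starting off v0) otherwise *)
  set (cyl := fun j : nat =>
     let n := fst (Cantor.of_nat j) in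
     let q := decode_history n (snd (Cantor.of_nat j)) in
     if Rlt_dec 0 (P q n) then ((fun _ : nat => S v0), 0%nat) else (q, n)).
  exists cyl. split.
  - intros p Hp. destruct (HA p Hp) as [n Hn].
    exists (Cantor.to_nat (n, encode_history n p)).
    unfold cyl. rewrite Cantor.cancel_of_to. simpl.
    pose proof (decode_encode_history n p) as Hdec.
    unfold P in *. rewrite (cyl_prob_agree l W X0 v0 _ p n Hdec).
    destruct (Rlt_dec 0 (cyl_prob l W X0 v0 p n)); [tauto|].
    intros k Hk. symmetry. now apply Hdec.
  - intros N. apply Rle_trans with 0; [|lra]. apply sumR_nonpos. intros j _.
    unfold cyl. destruct (Rlt_dec _ _) as [X|X]; cbn [fst snd].
    + unfold P, cyl_prob. cbn [prodR].
      rewrite (proj2 (Nat.eqb_neq (S v0) v0) (Nat.neq_succ_diag_l v0)). lra.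
    + now apply Rnot_lt_le.
Qed.

Lemma almost_surely_of_support (Q : (nat -> nat) -> Prop) :
  (forall p, (forall n, 0 < P p n) -> Q p) -> almost_surely l W X0 v0 Q.
Proof.
  intros HQ. apply null_set_of_impossible. intros p HnQ.
  apply NNPP. intros Hall. apply HnQ, HQ. intros n. apply NNPP. eauto.
Qed.

Section SummableWeights.

Hypothesis heven : Nat.Even l.
Variable s : R.
Hypothesis hs : infinite_sum (fun k => / W k) s.

(* On the support kappa_n converges: each W^*(X_n^{e_i}) is nondecreasing
   and bounded by s. *)
Lemma kappa_converges p : (forall n, 0 < P p n) ->
  exists L, Un_cv (fun n => kappa l W X0 p n) L.
Proof.
  intros Hpos.
  set (g := fun n i => Wstar W (Xn l X0 p n i)).
  assert (Hcv : forall i, { Li | Un_cv (fun n => g n i) Li }).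
  { intros i. apply growing_cv.
    - intros n. apply Wstar_mono; auto. apply Xn_mono. lia.
    - exists s. intros x [k ->]. now apply Wstar_le_sum. }
  exists (sumR (fun i => (-1) ^ i * proj1_sig (Hcv i)) l).
  apply Un_cv_ext with (fun n => sumR (fun i => (-1) ^ i * g n i) l).
  - intros n. now apply kappa_closed_form.
  - apply Un_cv_signed_sum. intros i _. apply (proj2_sig (Hcv i)).
Qed.

(* If moreover every edge is crossed infinitely often, every W^*(X_n^{e_i})
   tends to s and the alternating sum tends to 0. *)
Lemma kappa_vanishes p : (forall n, 0 < P p n) -> all_edges_io l p ->
  Un_cv (fun n => kappa l W X0 p n) 0.
Proof.
  intros Hpos Hio. rewrite <- (sumR_alternating_const s l heven).
  apply Un_cv_ext with (fun n => sumR (fun i => (-1) ^ i * Wstar W (Xn l X0 p n i)) l).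
  - intros n. now apply kappa_closed_form.
  - apply Un_cv_signed_sum. intros i Hi.
    apply (Wstar_cv_sum W s (fun n => Xn l X0 p n i) hs). now apply Xn_unbounded.
Qed.

End SummableWeights.

End ERRW.

Theorem mainTheorem5 (l : nat) (W : nat -> R) (X0 : nat -> nat) (v0 : nat)
  (hl : (3 <= l)%nat) (hW : forall k, 0 < W k) (hv0 : (v0 < l)%nat) :
  (forall i, (i < l)%nat -> martingale l W X0 v0 (kappa_i l W X0 i)) /\
  (Nat.Even l ->
     (forall p n, 0 < cyl_prob l W X0 v0 p n ->
        kappa l W X0 p n = sumR (fun i => (-1) ^ i * Wstar W (Xn l X0 p n i)) l) /\
     martingale l W X0 v0 (kappa l W X0) /\
     ((exists s, infinite_sum (fun k => / W k) s) ->
        almost_surely l W X0 v0 (fun p => exists L, Un_cv (fun n => kappa l W X0 p n) L) /\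
        almost_surely l W X0 v0
          (fun p => all_edges_io l p -> Un_cv (fun n => kappa l W X0 p n) 0))).
Proof.
  split; [intros i _; exact (kappa_i_martingale l W X0 v0 hl hW hv0 i)|].
  intros Heven. split; [exact (kappa_closed_form l W X0 v0 hl hW hv0 Heven)|].
  split; [exact (kappa_martingale l W X0 v0 hl hW hv0)|].
  intros [s Hs]. split; apply almost_surely_of_support; intros p Hpos.
  - exact (kappa_converges l W X0 v0 hl hW hv0 Heven s Hs p Hpos).
  - exact (kappa_vanishes l W X0 v0 hl hW hv0 Heven s Hs p Hpos).
Qed.
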